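(* Let $\alpha>\beta\geq 1$ be two real numbers such that $\alpha/\beta\notin\mathbb{N}$ and $[\alpha,\beta]\le 1$. Then $\mathcal{N}_\alpha\cap\mathcal{N}_\beta= \emptyset$.
   Context: Height: for irrational $\rho>0$, $H(\rho)=\infty$; for $\rho=a/q$ with $a,q\in\mathbb{N}$, $\gcd(a,q)=1$, $H(\rho)=\max\{a,q\}$. Bracket: $[\alpha,\beta]=H(\alpha/\beta)/\max\{\alpha,\beta\}$. $P^-(n)$ denotes the smallest prime factor of $n\in\mathbb{N}$, with $P^-(1)=\infty$. For $\alpha\ge1$, $\mathcal{N}_\alpha=\bigcup_{n\in\mathbb{N},\ P^-(n)>\alpha}(n\alpha-\tfrac12,n\alpha+\tfrac12)$. *)

From Stdlib Require Import Reals Lra ZArith Znumtheory ClassicalEpsilon.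
From Coquelicot Require Import Rbar.
Open Scope R_scope.

Definition reduced_rep (rho : R) (aq : nat * nat) : Prop :=
  (0 < fst aq)%nat /\ (0 < snd aq)%nat /\ Nat.gcd (fst aq) (snd aq) = 1%nat /\
  rho = INR (fst aq) / INR (snd aq).

(* Height: H(rho) = max{a,q} if rho = a/q in lowest terms, +oo if rho is irrational
   (for rho > 0, not being a positive rational means being irrational). *)
Definition height (rho : R) : Rbar :=
  match excluded_middle_informative (exists aq, reduced_rep rho aq) with
  | left h => let aq := proj1_sig (constructive_indefinite_description _ h) in
              Finite (INR (Nat.max (fst aq) (snd aq)))
  | right _ => p_infty
  end.

Definition bracket (alpha beta : R) : Rbar :=
  Rbar_div (height (alpha / beta)) (Finite (Rmax alpha beta)).

Definition is_least_prime_factor (n : nat) (p : Z) : Prop :=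
  prime p /\ (p | Z.of_nat n)%Z /\
  forall r : Z, prime r -> (r | Z.of_nat n)%Z -> (p <= r)%Z.

Definition Pminus (n : nat) : Rbar :=
  match excluded_middle_informative (exists p, is_least_prime_factor n p) with
  | left h => Finite (IZR (proj1_sig (constructive_indefinite_description _ h)))
  | right _ => p_infty
  end.

Definition N_set (alpha : R) (x : R) : Prop :=
  exists n : nat, (1 <= n)%nat /\ Rbar_lt (Finite alpha) (Pminus n) /\
    INR n * alpha - 1/2 < x /\ x < INR n * alpha + 1/2.

(** Write alpha/beta = a/q in lowest terms; the bracket condition says a, q <= alpha, and
    alpha q = a beta then gives q <= beta, with q >= 2 since alpha/beta is not an integer.
    If x lies in both sets, |n alpha - m beta| < 1 for admissible n, m, and
    q (n alpha - m beta) = beta (n a - m q).  If n a <> m q, the right-hand side has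
    absolute value at least beta >= q, so |n alpha - m beta| >= 1.  If n a = m q, then
    q divides n by coprimality, so P^-(n) <= q <= alpha, contradicting P^-(n) > alpha. *)

From Pilot Require Import Defs.
From Stdlib Require Import Reals.
From Coquelicot Require Import Rbar.
From Stdlib Require Import Lra Lia ZArith Znumtheory Classical ClassicalEpsilon Wf_nat.
Open Scope R_scope.

Lemma least_prime_factor_unique (n : nat) (p p' : Z) :
  is_least_prime_factor n p -> is_least_prime_factor n p' -> p = p'.
Proof.
  intros (Hp & Hpn & Hpmin) (Hp' & Hp'n & Hp'min).
  apply Z.le_antisymm; [apply Hpmin | apply Hp'min]; assumption.
Qed.

Lemma Pminus_eq (n : nat) (p : Z) :
  is_least_prime_factor n p -> Defs.Pminus n = Finite (IZR p).
Proof.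
  intros Hp; unfold Defs.Pminus.
  destruct excluded_middle_informative as [Hex | Hnex].
  - destruct constructive_indefinite_description as [p' Hp']; simpl.
    now rewrite (least_prime_factor_unique n p' p).
  - exfalso; apply Hnex; now exists p.
Qed.

Lemma least_nontrivial_divisor_is_least_prime_factor (n k : nat) :
  (2 <= k)%nat -> (Z.of_nat k | Z.of_nat n)%Z ->
  (forall d : nat, (2 <= d)%nat -> (Z.of_nat d | Z.of_nat n)%Z -> (k <= d)%nat) ->
  is_least_prime_factor n (Z.of_nat k).
Proof.
  intros Hk Hkn Hmin.
  split; [| split; [exact Hkn |]].
  - apply prime_alt; split; [lia |].
    intros j Hj Hjk.
    assert (Hjn : (Z.of_nat (Z.to_nat j) | Z.of_nat n)%Z)
      by (rewrite Z2Nat.id by lia; eapply Z.divide_trans; eassumption).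
    specialize (Hmin (Z.to_nat j) ltac:(lia) Hjn); lia.
  - intros r Hr Hrn.
    pose proof (prime_ge_2 r Hr).
    rewrite <- (Z2Nat.id r) in Hrn by lia.
    specialize (Hmin (Z.to_nat r) ltac:(lia) Hrn); lia.
Qed.

(* Also for [n = 0], where [P^-(0) = 2]. *)
Lemma Pminus_le_divisor (n d : nat) :
  (2 <= d)%nat -> (Z.of_nat d | Z.of_nat n)%Z -> Rbar_le (Defs.Pminus n) (Finite (INR d)).
Proof.
  intros Hd Hdn.
  set (P k := (2 <= k)%nat /\ (Z.of_nat k | Z.of_nat n)%Z).
  destruct (dec_inh_nat_subset_has_unique_least_element P (fun k => classic (P k)))
    as [k [[[Hk Hkn] Hmin] _]]; [now exists d |].
  rewrite (Pminus_eq n (Z.of_nat k)).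
  - simpl; rewrite <- INR_IZR_INZ; apply le_INR, Hmin; now split.
  - apply least_nontrivial_divisor_is_least_prime_factor; try assumption.
    intros d' Hd' Hd'n; apply Hmin; now split.
Qed.

Lemma Pminus_le_coprime_denominator (a q n m : nat) :
  (2 <= q)%nat -> Nat.gcd a q = 1%nat -> (n * a = m * q)%nat ->
  Rbar_le (Defs.Pminus n) (Finite (INR q)).
Proof.
  intros Hq Hgcd Heq.
  assert (Hqn : Nat.divide q n).
  { apply (Nat.gauss q a n); [exists m; lia | now rewrite Nat.gcd_comm]. }
  apply Pminus_le_divisor; [exact Hq |].
  destruct Hqn as [c ->]; exists (Z.of_nat c); lia.
Qed.

Lemma Rbar_div_p_infty_pos (M : R) : 0 < M -> Rbar_div p_infty (Finite M) = p_infty.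
Proof.
  intros HM; pose proof (Rinv_0_lt_compat M HM) as HinvM.
  unfold Rbar_div; simpl.
  destruct Rle_dec as [H | H]; [| lra].
  destruct Rle_lt_or_eq_dec; [reflexivity | lra].
Qed.

Lemma bracket_le_1_reduced_rep (alpha beta : R) :
  0 < Rmax alpha beta -> Rbar_le (bracket alpha beta) (Finite 1) ->
  exists a q : nat, reduced_rep (alpha / beta) (a, q) /\
    INR (Nat.max a q) <= Rmax alpha beta.
Proof.
  intros HM Hbr; unfold bracket, height in Hbr.
  destruct excluded_middle_informative as [Hex | _].
  - destruct constructive_indefinite_description as [[a q] Hrep]; simpl in Hbr.
    exists a, q; split; [exact Hrep |].
    now apply Rcomplements.Rdiv_le_1.
  - now rewrite Rbar_div_p_infty_pos in Hbr.
Qed.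

Lemma reduced_rep_cross (alpha beta : R) (a q : nat) :
  beta <> 0 -> reduced_rep (alpha / beta) (a, q) -> alpha * INR q = INR a * beta.
Proof.
  intros Hb (_ & Hq & _ & Hr); simpl in *.
  apply lt_0_INR in Hq.
  replace alpha with (alpha / beta * beta) by (field; lra).
  rewrite Hr; field; lra.
Qed.

Lemma Rabs_INR_sub_ge_1 (i j : nat) : i <> j -> 1 <= Rabs (INR i - INR j).
Proof.
  intros Hij.
  rewrite !INR_IZR_INZ, <- minus_IZR, Rabs_Zabs.
  apply IZR_le; lia.
Qed.

Lemma dist_multiples_ge_1 (alpha beta : R) (a q n m : nat) :
  (0 < q)%nat -> INR q <= beta -> alpha * INR q = INR a * beta -> (n * a <> m * q)%nat ->
  1 <= Rabs (INR n * alpha - INR m * beta).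
Proof.
  intros Hq Hqb Hcross Hnm.
  apply lt_0_INR in Hq.
  assert (Hscale : INR q * (INR n * alpha - INR m * beta)
                   = beta * (INR (n * a) - INR (m * q))).
  { rewrite !mult_INR.
    transitivity (INR n * (alpha * INR q) - INR m * INR q * beta); [ring |].
    rewrite Hcross; ring. }
  assert (Habs : INR q * Rabs (INR n * alpha - INR m * beta)
                 = beta * Rabs (INR (n * a) - INR (m * q))).
  { rewrite <- (Rabs_right (INR q)) at 1 by lra.
    rewrite <- Rabs_mult, Hscale, Rabs_mult, (Rabs_right beta) by lra.
    reflexivity. }
  pose proof (Rabs_INR_sub_ge_1 _ _ Hnm).
  nra.
Qed.

Theorem lemma2p6 (alpha beta : R) :
  1 <= beta -> beta < alpha ->
  ~ (exists n : nat, alpha / beta = INR n) ->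
  Rbar_le (bracket alpha beta) (Finite 1) ->
  forall x : R, ~ (N_set alpha x /\ N_set beta x).
Proof.
  intros Hb Hab Hnint Hbr x [(n & _ & Hn & Hnx) (m & _ & _ & Hmx)].
  assert (Hmax : Rmax alpha beta = alpha) by (apply Rmax_left; lra).
  destruct (bracket_le_1_reduced_rep alpha beta) as (a & q & Hrep & Hle);
    [lra | exact Hbr |].
  rewrite Hmax in Hle.
  pose proof (reduced_rep_cross alpha beta a q ltac:(lra) Hrep) as Hcross.
  destruct Hrep as (_ & Hq & Hgcd & Hr); cbn [fst snd] in *.
  assert (Ha_le : INR a <= alpha) by (eapply Rle_trans; [apply le_INR, Nat.le_max_l | exact Hle]).
  assert (Hq_le : INR q <= alpha) by (eapply Rle_trans; [apply le_INR, Nat.le_max_r | exact Hle]).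
  assert (Hq2 : (2 <= q)%nat).
  { destruct (Nat.eq_dec q 1) as [-> | ]; [| lia].
    exfalso; apply Hnint; exists a; rewrite Hr; simpl; field. }
  assert (Hclose : Rabs (INR n * alpha - INR m * beta) < 1) by (apply Rabs_def1; lra).
  destruct (Nat.eq_dec (n * a) (m * q)) as [Heq | Hneq].
  - pose proof (Rbar_lt_le_trans _ _ _ Hn
      (Pminus_le_coprime_denominator a q n m Hq2 Hgcd Heq)) as Hlt.
    simpl in Hlt; lra.
  - assert (Hqb : INR q <= beta) by (pose proof (pos_INR q); nra).
    pose proof (dist_multiples_ge_1 alpha beta a q n m Hq Hqb Hcross Hneq); lra.
Qed.
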